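(* Let $A\in \mathbb{R}^{m\times n}$ with $A^{\dagger}\geq 0$. Let $A=P_{1}-R_{1}+S_{1}$ and $A=P_{2}-R_{2}+S_{2}$ be two weak regular proper double splittings of $A$. Define $$W_{1}=\begin{pmatrix} P_{1}^{\dagger}R_{1} & -P_{1}^{\dagger}S_{1}\\ I & 0\end{pmatrix},\qquad W_{2}=\begin{pmatrix} P_{2}^{\dagger}R_{2} & -P_{2}^{\dagger}S_{2}\\ I & 0\end{pmatrix}\in\mathbb{R}^{2n\times 2n},$$ where $I$ is the $n\times n$ identity matrix. If $P_{1}^{\dagger}A\geq P_{2}^{\dagger}A$ and at least one of the conditions (i) $P_{1}^{\dagger}R_{1}\geq P_{2}^{\dagger}R_{2}$, (ii) $P_{1}^{\dagger}S_{1}\geq P_{2}^{\dagger}S_{2}$ holds, then $\rho(W_{1})\leq \rho(W_{2})< 1$.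
   Context: $A^{\dagger}$ denotes the Moore–Penrose inverse of $A$. For real matrices, $B\geq 0$ means all entries of $B$ are nonnegative, and $B\geq C$ means $B-C\geq 0$. $\rho(\cdot)$ denotes the spectral radius. For $A\in\mathbb{R}^{m\times n}$, a decomposition $A=P-R+S$ with $P,R,S\in\mathbb{R}^{m\times n}$ is a proper double splitting if $\mathcal{R}(A)=\mathcal{R}(P)$ and $\mathcal{N}(A)=\mathcal{N}(P)$. A proper double splitting is called weak regular if $P^{\dagger}\geq 0$, $P^{\dagger}R\geq 0$ and $-P^{\dagger}S\geq 0$. *)

From HB Require Import structures.
From mathcomp Require Import all_boot all_order all_algebra.
From mathcomp Require Import complex.
Set Implicit Arguments. Unset Strict Implicit. Unset Printing Implicit Defensive.
Import Order.TTheory GRing.Theory Num.Theory.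
Local Open Scope ring_scope.
Local Open Scope complex_scope.

Definition is_MP_inverse (R : rcfType) (m n : nat)
    (A : 'M[R]_(m, n)) (X : 'M[R]_(n, m)) : Prop :=
  [/\ A *m X *m A = A, X *m A *m X = X,
      (A *m X)^T = A *m X & (X *m A)^T = X *m A].

Definition mx_nonneg (R : rcfType) (m n : nat) (B : 'M[R]_(m, n)) : Prop :=
  forall i j, 0 <= B i j.
Definition mx_ge (R : rcfType) (m n : nat) (B C : 'M[R]_(m, n)) : Prop :=
  mx_nonneg (B - C).

Definition same_range (R : rcfType) (m n : nat) (A P : 'M[R]_(m, n)) : Prop :=
  forall y : 'cV[R]_m, (exists x, y = A *m x) <-> (exists x, y = P *m x).
Definition same_null (R : rcfType) (m n : nat) (A P : 'M[R]_(m, n)) : Prop :=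
  forall x : 'cV[R]_n, A *m x = 0 <-> P *m x = 0.

Definition proper_double_splitting (R : rcfType) (m n : nat)
    (A P Rm S : 'M[R]_(m, n)) : Prop :=
  [/\ A = P - Rm + S, same_range A P & same_null A P].

Definition weak_regular_pds (R : rcfType) (m n : nat)
    (A P Rm S : 'M[R]_(m, n)) (Pd : 'M[R]_(n, m)) : Prop :=
  [/\ proper_double_splitting A P Rm S, is_MP_inverse P Pd,
      mx_nonneg Pd, mx_nonneg (Pd *m Rm) & mx_nonneg (- (Pd *m S))].

(* spectral radius: maximum modulus of the (complex) eigenvalues, i.e. of the
   roots of the characteristic polynomial over R[i] *)
Definition spectral_radius (R : rcfType) (n : nat) (A : 'M[R]_n) : R :=
  \big[Num.max/0]_(z <- sval (closed_field_poly_normal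
                      (char_poly (map_mx (fun x : R => x%:C) A)))) ComplexField.Normc.normc z.

Definition iter_mx (R : rcfType) (m n : nat)
    (Pd : 'M[R]_(n, m)) (Rm S : 'M[R]_(m, n)) : 'M[R]_(n + n) :=
  block_mx (Pd *m Rm) (- (Pd *m S)) 1%:M 0.

(* For a nonnegative matrix M and r > 0, rho(M) <= r as soon as M x <= r x for
   some positive vector x (Collatz--Wielandt); conversely rho(M) < r yields such
   an x, namely adj(r - M) 1, which is positive for large r and cannot lose
   positivity as r decreases while det(r - M) > 0.  For W = [B C; I 0] with
   B, C >= 0 both conditions read (B + C / r) x <= r x.
   Equal null spaces give P^+ P = A^+ A, so B + C = A^+ A - P^+ A; hence the
   hypotheses give B1 + C1 <= B2 + C2 and C1 <= C2, so B1 + C1 / r <= B2 + C2 / r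
   for r <= 1 and every subinvariant vector of W2 is one of W1.  Finally
   u = A^+ 1 + eta 1 satisfies (B + C) u < u, which forces rho(W) < 1. *)

From HB Require Import structures.
From mathcomp Require Import all_boot all_order all_algebra.
From mathcomp Require Import complex polyrcf.
From mathcomp Require Import lra.
Import Order.TTheory GRing.Theory Num.Theory ComplexField.Normc.
Set Implicit Arguments. Unset Strict Implicit. Unset Printing Implicit Defensive.
Local Open Scope ring_scope.
Local Open Scope complex_scope.

Section EntrywiseOrder.
Variable R : rcfType.

Lemma mx_geP m k (X Y : 'M[R]_(m, k)) : mx_ge X Y <-> forall i j, Y i j <= X i j.
Proof.
by split=> XY i j; [have := XY i j; rewrite !mxE subr_ge0 | rewrite !mxE subr_ge0].
Qed.

Lemma ler_wpmulmx2r m k (X Y : 'M[R]_(m, k)) (v : 'cV[R]_k) i :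
  mx_ge Y X -> (forall j, 0 <= v j 0) -> (X *m v) i 0 <= (Y *m v) i 0.
Proof.
move=> /mx_geP XY v_ge0; rewrite !mxE; apply: ler_sum => j _.
exact: ler_wpM2r.
Qed.

Lemma ler_wpmulmx2l m k (X : 'M[R]_(m, k)) (v w : 'cV[R]_k) i :
  mx_nonneg X -> (forall j, v j 0 <= w j 0) -> (X *m v) i 0 <= (X *m w) i 0.
Proof. by move=> X_ge0 vw; rewrite !mxE; apply: ler_sum => j _; apply: ler_wpM2l. Qed.

Lemma mulmx_nonneg m k l (X : 'M[R]_(m, k)) (Y : 'M[R]_(k, l)) :
  mx_nonneg X -> mx_nonneg Y -> mx_nonneg (X *m Y).
Proof.
by move=> X_ge0 Y_ge0 i j; rewrite mxE; apply: sumr_ge0 => k' _; apply: mulr_ge0.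
Qed.
End EntrywiseOrder.

Section SpectralRadius.
Variable R : rcfType.
Implicit Types (n : nat) (t r : R).

Lemma normc_ge0 (z : R[i]) : 0 <= normc z.
Proof. by case: z => a b; rewrite /normc sqrtr_ge0. Qed.

Lemma normc_real (x : R) : normc x%:C = `|x|.
Proof. by rewrite /normc /= expr0n /= addr0 sqrtr_sqr. Qed.

Lemma normc_sum (I : finType) (f : I -> R[i]) :
  normc (\sum_i f i) <= \sum_i normc (f i).
Proof.
elim/big_ind2: _ => [|a b c d ab cd|//]; first by rewrite normc0.
by apply: le_trans (le_normcD _ _) _; apply: lerD.
Qed.

Local Notation char_poly_C M := (char_poly (map_mx (fun x : R => x%:C) M)).

Lemma spectral_radius_ge0 n (M : 'M[R]_n) : 0 <= spectral_radius M.
Proof. exact: bigmax_ge_id. Qed.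

Lemma root_char_polyE n (M : 'M[R]_n) z :
  root (char_poly_C M) z =
  (z \in sval (closed_field_poly_normal (char_poly_C M))).
Proof.
case: closed_field_poly_normal => s /= ->.
rewrite rootZ ?root_prod_XsubC //.
by rewrite lead_coef_eq0 -size_poly_eq0 size_char_poly.
Qed.

Lemma spectral_radius_le n (M : 'M[R]_n) r : 0 <= r ->
  (forall z, root (char_poly_C M) z -> normc z <= r) ->
  spectral_radius M <= r.
Proof.
move=> r_ge0 rootsM; rewrite /spectral_radius big_seq.
by apply: bigmax_le r_ge0 _ => z z_in; apply: rootsM; rewrite root_char_polyE.
Qed.

Lemma normc_root_le_spectral_radius n (M : 'M[R]_n) z :
  root (char_poly_C M) z -> normc z <= spectral_radius M.
Proof. by rewrite root_char_polyE => z_in; exact: le_bigmax_seq. Qed.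

Lemma char_poly_gt0 n (M : 'M[R]_n) t :
  spectral_radius M < t -> 0 < (char_poly M).[t].
Proof.
move=> rho_lt_t; have t_ge0 := le_trans (spectral_radius_ge0 M) (ltW rho_lt_t).
have no_root x : t <= x -> ~~ root (char_poly M) x.
  move=> tx; apply: contraTN rho_lt_t => /rootP px0.
  have : root (char_poly_C M) x%:C.
    by rewrite -map_char_poly; apply/rootP; rewrite horner_map /= px0.
  move/normc_root_le_spectral_radius; rewrite normc_real ger0_norm ?(le_trans t_ge0) //.
  by move/(le_trans tx); rewrite leNgt.
have lc_gt0 : 0 < lead_coef (char_poly M) by rewrite (monicP (char_poly_monic M)).
have [T leadT] := poly_pinfty_gt_lc lc_gt0.
rewrite (monicP (char_poly_monic M)) in leadT.
have t_le_maxT : t <= Num.max T t by rewrite le_max lexx orbT.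
rewrite ltNge; apply/negP => pt_le0.
have [|x /andP[tx _] px0] := poly_ivt t_le_maxT (p := char_poly M).
  by rewrite pt_le0 (le_trans ler01) // leadT // le_max lexx.
by move: (no_root x tx); rewrite px0.
Qed.

Lemma eigenvector_of_root (F : fieldType) n (M : 'M[F]_n) z :
  root (char_poly M) z -> exists2 w : 'cV[F]_n, M *m w = z *: w & w != 0.
Proof.
have char_poly_tr : char_poly M^T = char_poly M.
  rewrite /char_poly -det_tr; congr (\det _).
  by apply/matrixP => i j; rewrite !mxE eq_sym.
rewrite -char_poly_tr -eigenvalue_root_char => /eigenvalueP [v Mv v_neq0].
exists v^T; last by rewrite trmx_eq0.
by rewrite -(trmxK M) -trmx_mul Mv linearZ.
Qed.

(* Compare an eigenvector [w] with [x] at an index where [|w_i| / x_i] is maximal. *)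
Lemma spectral_radius_le_subinvariant n (M : 'M[R]_n) (x : 'cV[R]_n) r :
  mx_nonneg M -> (forall i, 0 < x i 0) -> 0 <= r ->
  (forall i, (M *m x) i 0 <= r * x i 0) -> spectral_radius M <= r.
Proof.
move=> M_ge0 x_gt0 r_ge0 Mx_le; apply: spectral_radius_le => // z.
move=> /eigenvector_of_root [w Mw /eqP w_neq0].
have [i0 wi0_neq0] : exists i, w i 0 != 0.
  apply/existsP; apply: contra_notT w_neq0 => /existsPn w0.
  by apply/matrixP => i j; rewrite (ord1 j) mxE; apply/eqP/negbNE/w0.
pose F i := normc (w i 0) / x i 0.
have [k _ F_le] := arg_maxP F (i0 := i0) isT.
have w_le j : normc (w j 0) <= F k * x j 0 by rewrite -ler_pdivrMr //; exact: F_le.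
have wk : normc (w k 0) = F k * x k 0 by rewrite /F mulfVK ?gt_eqF.
have Fk_gt0 : 0 < F k.
  apply: lt_le_trans (F_le i0 isT); rewrite /F divr_gt0 // lt_def normc_ge0.
  by rewrite andbT; apply: contra wi0_neq0 => /eqP/eq0_normc ->.
have wk_gt0 : 0 < normc (w k 0) by rewrite wk mulr_gt0.
rewrite -(ler_pM2r wk_gt0) -normcM.
have -> : z * w k 0 = \sum_j (M k j)%:C * w j 0.
  have := congr1 (fun v : 'cV[R[i]]_n => v k 0) Mw; rewrite !mxE => <-.
  by apply: eq_bigr => j; rewrite mxE.
apply: le_trans (normc_sum _) _.
apply: le_trans (_ : \sum_j M k j * (F k * x j 0) <= _).
  apply: ler_sum => j _; rewrite normcM normc_real ger0_norm //.
  exact: ler_wpM2l.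
have -> : \sum_j M k j * (F k * x j 0) = F k * (M *m x) k 0.
  by rewrite mxE mulr_sumr; apply: eq_bigr => j _; rewrite mulrCA.
by rewrite wk mulrCA ler_wpM2l ?(ltW Fk_gt0).
Qed.
End SpectralRadius.

(* At the largest root of [\prod_i p i] in ]a, b[ every [p i] would be >= 0
   (a sign change would give a larger root), hence > 0. *)
Lemma poly_family_gt0 (R : rcfType) (I : finType) (p : I -> {poly R}) a b :
  (forall i, 0 < (p i).[b]) ->
  (forall t, a < t < b -> (forall i, 0 <= (p i).[t]) -> forall i, 0 < (p i).[t]) ->
  forall t, a < t < b -> forall i, 0 < (p i).[t].
Proof.
move=> pb_gt0 ge0_gt0; pose q := \prod_i p i.
have qE t : q.[t] = \prod_i (p i).[t] by rewrite horner_prod.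
have pos_below_roots t : a < t < b -> {in `]t, b[, forall x, ~~ root q x} ->
    forall i, 0 < (p i).[t].
  move=> /andP[a_lt_t t_lt_b] noroot_q; apply: ge0_gt0; first by rewrite a_lt_t.
  move=> i; rewrite leNgt; apply/negP => pt_lt0.
  have [|x x_in /rootP px0] := poly_ivtoo (p := p i) (ltW t_lt_b).
    by rewrite pmulr_llt0.
  have /negP[] := noroot_q x x_in.
  by rewrite rootE qE (bigD1 i) //= px0 mul0r.
have q_neq0 : q != 0.
  apply/eqP => q0; have : 0 < \prod_i (p i).[b] by apply: prodr_gt0 => i _.
  by rewrite -qE q0 horner0 ltxx.
case: (prev_rootP q a b) => [/eqP|z _ qz0 z_in noroot_q|c _ _ noroot_q].
- by rewrite (negPf q_neq0).
- move: z_in; rewrite in_itv /= => z_ab.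
  have : 0 < \prod_i (p i).[z].
    by apply: prodr_gt0 => i _; exact: pos_below_roots.
  by rewrite -qE qz0 ltxx.
- move=> t /andP[a_lt_t t_lt_b]; apply: pos_below_roots; first by rewrite a_lt_t.
  move=> x; rewrite in_itv /= => /andP[tx xb]; apply: noroot_q.
  by rewrite in_itv /= xb (lt_trans a_lt_t).
Qed.

Section SubinvariantVector.
Variables (R : rcfType) (n : nat) (M : 'M[R]_n).
Hypothesis M_ge0 : mx_nonneg M.

(* [adj_ones t = det (t - M) (t - M)^-1 1], polynomial in [t]. *)
Definition adj_ones (t : R) : 'cV[R]_n := \adj (t%:M - M) *m const_mx 1.

Lemma adj_onesE t i : t * adj_ones t i 0 - (M *m adj_ones t) i 0 = \det (t%:M - M).
Proof.
have := congr1 (fun v : 'cV[R]_n => v i 0)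
  (mulmxA (t%:M - M) (\adj (t%:M - M)) (const_mx 1)).
by rewrite mul_mx_adj mul_scalar_mx mulmxBl mul_scalar_mx !mxE mulr1 => ->.
Qed.

Lemma adj_ones_gt0 t : 0 < t -> 0 < \det (t%:M - M) ->
  (forall i, 0 <= adj_ones t i 0) -> forall i, 0 < adj_ones t i 0.
Proof.
move=> t_gt0 det_gt0 y_ge0 i; rewrite -(pmulr_rgt0 _ t_gt0).
rewrite -(subrK ((M *m adj_ones t) i 0) (t * _)) adj_onesE ltr_pwDl // mxE.
by apply: sumr_ge0 => j _; apply: mulr_ge0.
Qed.

Lemma adj_ones_ge0 t : 0 < \det (t%:M - M) -> (forall i, \sum_j M i j < t) ->
  forall i, 0 <= adj_ones t i 0.
Proof.
move=> det_gt0 rows_lt i0.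
have [k _ min_k] := arg_minP (fun i => adj_ones t i 0) (i0 := i0) isT.
apply: le_trans (min_k i0 isT); rewrite leNgt; apply/negP => yk_lt0.
have My_ge : (\sum_j M k j) * adj_ones t k 0 <= (M *m adj_ones t) k 0.
  rewrite [X in _ <= X]mxE mulr_suml; apply: ler_sum => j _.
  by apply: ler_wpM2l; [|exact: min_k].
have ty_lt : t * adj_ones t k 0 < (\sum_j M k j) * adj_ones t k 0.
  by rewrite ltr_nM2r.
have := adj_onesE t k; lra.
Qed.

Lemma horner_char_poly_mx t : map_mx (horner_eval t) (char_poly_mx M) = t%:M - M.
Proof.
apply/matrixP => i j.
by rewrite !mxE /horner_eval hornerD hornerN hornerMn hornerX hornerC.
Qed.

Lemma horner_char_poly t : (char_poly M).[t] = \det (t%:M - M).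
Proof. by rewrite -[LHS]/(horner_eval t _) -det_map_mx horner_char_poly_mx. Qed.

Definition adj_ones_poly (i : 'I_n) : {poly R} :=
  (\adj (char_poly_mx M) *m (const_mx 1 : 'cV_n)) i 0.

Lemma horner_adj_ones_poly t i : (adj_ones_poly i).[t] = adj_ones t i 0.
Proof.
have -> : (adj_ones_poly i).[t] =
    map_mx (horner_eval t) (\adj (char_poly_mx M) *m (const_mx 1 : 'cV_n)) i 0.
  by rewrite mxE.
rewrite map_mxM map_mx_adj horner_char_poly_mx.
by congr ((_ *m _) i 0); apply/matrixP => k l; rewrite !mxE rmorph1.
Qed.

Lemma subinvariant_of_spectral_radius_lt r : spectral_radius M < r ->
  exists2 y : 'cV[R]_n, forall i, 0 < y i 0 & forall i, (M *m y) i 0 <= r * y i 0.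
Proof.
move=> rho_lt_r; have rho_ge0 := spectral_radius_ge0 M.
have det_gt0 t : spectral_radius M < t -> 0 < \det (t%:M - M).
  by rewrite -horner_char_poly; exact: char_poly_gt0.
have M_sum_ge0 : 0 <= \sum_i \sum_j M i j.
  by apply: sumr_ge0 => i _; apply: sumr_ge0.
pose T := r + 1 + \sum_i \sum_j M i j.
have r_lt_T : r < T by rewrite /T; lra.
have rows_lt_T i : \sum_j M i j < T.
  apply: le_lt_trans (_ : \sum_i \sum_j M i j < T); last by rewrite /T; lra.
  by rewrite [leRHS](bigD1 i) //= lerDl; apply: sumr_ge0 => k _; apply: sumr_ge0.
have y_gt0 : forall t, spectral_radius M < t < T ->
    forall i, 0 < (adj_ones_poly i).[t].
  apply: poly_family_gt0 => [i | t /andP[rho_lt_t _] y_ge0 i].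
    rewrite horner_adj_ones_poly.
    have rho_lt_T := lt_trans rho_lt_r r_lt_T.
    have det_T := det_gt0 T rho_lt_T.
    apply: (adj_ones_gt0 (le_lt_trans rho_ge0 rho_lt_T) det_T _ i).
    exact: adj_ones_ge0 det_T rows_lt_T.
  rewrite horner_adj_ones_poly.
  apply: adj_ones_gt0 => [||j]; [exact: le_lt_trans rho_ge0 rho_lt_t|exact: det_gt0|].
  by rewrite -horner_adj_ones_poly.
exists (adj_ones r) => i; first by rewrite -horner_adj_ones_poly y_gt0 ?rho_lt_r.
by have := adj_onesE r i; have := det_gt0 r rho_lt_r; lra.
Qed.
End SubinvariantVector.

Section IterationMatrix.
Variables (R : rcfType) (n : nat).
Implicit Types (B C : 'M[R]_n) (x : 'cV[R]_n) (r : R).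

Lemma block_iter_nonneg B C : mx_nonneg B -> mx_nonneg C ->
  mx_nonneg (block_mx B C 1%:M 0).
Proof.
move=> B_ge0 C_ge0 i j.
case: (split_ordP i) => {}i ->; case: (split_ordP j) => {}j ->.
- by rewrite block_mxEul.
- by rewrite block_mxEur.
- by rewrite block_mxEdl mxE ler0n.
- by rewrite block_mxEdr mxE.
Qed.

Lemma mul_block_iter_col B C (x1 x2 : 'cV[R]_n) :
  block_mx B C 1%:M 0 *m col_mx x1 x2 = col_mx (B *m x1 + C *m x2) x1.
Proof. by rewrite mul_block_col mul1mx mul0mx addr0. Qed.

(* Test the block matrix against the vector [x; x / r]. *)
Lemma spectral_radius_block_le B C x r :
  mx_nonneg B -> mx_nonneg C -> 0 < r -> (forall i, 0 < x i 0) ->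
  (forall i, ((B + r^-1 *: C) *m x) i 0 <= r * x i 0) ->
  spectral_radius (block_mx B C 1%:M 0) <= r.
Proof.
move=> B_ge0 C_ge0 r_gt0 x_gt0 x_sub.
apply: (spectral_radius_le_subinvariant (x := col_mx x (r^-1 *: x))) (ltW r_gt0) _.
- exact: block_iter_nonneg.
- move=> i; case: (split_ordP i) => {}i ->; rewrite ?col_mxEu ?col_mxEd //.
  by rewrite mxE mulr_gt0 ?invr_gt0.
- rewrite mul_block_iter_col => i; case: (split_ordP i) => {}i ->.
    by rewrite !col_mxEu -scalemxAr scalemxAl -mulmxDl.
  by rewrite !col_mxEd mxE mulrA mulfV ?gt_eqF ?mul1r.
Qed.

Lemma subinvariant_of_spectral_radius_block_lt B C r :
  mx_nonneg B -> mx_nonneg C -> spectral_radius (block_mx B C 1%:M 0) < r ->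
  exists2 x : 'cV[R]_n,
    forall i, 0 < x i 0 & forall i, ((B + r^-1 *: C) *m x) i 0 <= r * x i 0.
Proof.
move=> B_ge0 C_ge0 rho_lt_r.
have r_gt0 : 0 < r := le_lt_trans (spectral_radius_ge0 _) rho_lt_r.
have [y y_gt0 y_sub] := subinvariant_of_spectral_radius_lt
  (block_iter_nonneg B_ge0 C_ge0) rho_lt_r.
rewrite -(vsubmxK y) in y_gt0 y_sub; set x1 := usubmx y in y_gt0 y_sub *.
set x2 := dsubmx y in y_gt0 y_sub.
exists x1 => i; first by have := y_gt0 (lshift n i); rewrite col_mxEu.
have := y_sub (lshift n i); rewrite mul_block_iter_col !col_mxEu mxE.
apply: le_trans; rewrite mulmxDl -scalemxAl scalemxAr mxE lerD2l.
apply: ler_wpmulmx2l => // j.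
rewrite mxE ler_pdivrMl //; have := y_sub (rshift n j).
by rewrite mul_block_iter_col !col_mxEd mxE.
Qed.

Lemma spectral_radius_block_lt1 B C (u : 'cV[R]_n) :
  mx_nonneg B -> mx_nonneg C -> (forall i, 0 < u i 0) ->
  (forall i, ((B + C) *m u) i 0 < u i 0) ->
  spectral_radius (block_mx B C 1%:M 0) < 1.
Proof.
move=> B_ge0 C_ge0 u_gt0 BCu_lt.
have u_ge0 : mx_nonneg u by move=> i j; rewrite (ord1 j) ltW.
have [th [th_ge0 th_lt1 BCu_le]] : exists th,
    [/\ 0 <= th, th < 1 & forall i, ((B + C) *m u) i 0 <= th * u i 0].
  exists (\big[Num.max/0]_i (((B + C) *m u) i 0 / u i 0)); split.
  - exact: bigmax_ge_id.
  - by apply: bigmax_lt => // i _; rewrite ltr_pdivrMr // mul1r.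
  - by move=> i; rewrite -ler_pdivrMr //; exact: le_bigmax.
have [r [r_gt0 r_lt1 th_le]] : exists r, [/\ 0 < r, r < 1 & th <= r * r].
  by exists ((1 + th) / 2); split; nra.
apply: (le_lt_trans _ r_lt1); apply: (spectral_radius_block_le _ _ r_gt0 u_gt0) => // i.
have b_ge0 := mulmx_nonneg B_ge0 u_ge0 i 0.
have c_ge0 := mulmx_nonneg C_ge0 u_ge0 i 0.
have := BCu_le i; rewrite mulmxDl [leLHS]mxE => bc_le.
rewrite mulmxDl -scalemxAl [leLHS]mxE [X in _ + X]mxE.
rewrite -(ler_pM2l r_gt0) mulrDr mulVKf ?gt_eqF //.
have := u_gt0 i; nra.
Qed.

Lemma spectral_radius_block_le_mono (B1 C1 B2 C2 : 'M[R]_n) :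
  mx_nonneg B1 -> mx_nonneg C1 -> mx_nonneg B2 -> mx_nonneg C2 ->
  mx_ge (B2 + C2) (B1 + C1) -> mx_ge C2 C1 ->
  spectral_radius (block_mx B2 C2 1%:M 0) < 1 ->
  spectral_radius (block_mx B1 C1 1%:M 0) <= spectral_radius (block_mx B2 C2 1%:M 0).
Proof.
move=> B1_ge0 C1_ge0 B2_ge0 C2_ge0 /mx_geP sum_le /mx_geP C_le rho2_lt1.
apply/ler_addgt0Pr => e e_gt0.
pose r := Num.min (spectral_radius (block_mx B2 C2 1%:M 0) + e) 1.
have rho2_lt_r : spectral_radius (block_mx B2 C2 1%:M 0) < r.
  by rewrite lt_min rho2_lt1 ltrDl e_gt0.
have r_gt0 : 0 < r := le_lt_trans (spectral_radius_ge0 _) rho2_lt_r.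
have r_le1 : r <= 1 by rewrite ge_min lexx orbT.
suff : spectral_radius (block_mx B1 C1 1%:M 0) <= r.
  by move/le_trans; apply; rewrite ge_min lexx.
have [x x_gt0 x_sub] :=
  subinvariant_of_spectral_radius_block_lt B2_ge0 C2_ge0 rho2_lt_r.
apply: (spectral_radius_block_le B1_ge0 C1_ge0 r_gt0 x_gt0) => i.
apply: le_trans (x_sub i); apply: ler_wpmulmx2r => [|j]; last exact: ltW.
have rV_ge1 : 1 <= r^-1 by rewrite invf_ge1.
apply/mx_geP => k l; have := sum_le k l; have := C_le k l; rewrite !mxE.
have := C1_ge0 k l; nra.
Qed.
End IterationMatrix.

Section MoorePenrose.
Variable R : rcfType.

Lemma MP_inverse_sym_fixl m n (A : 'M[R]_(m, n)) Ad (Q : 'M[R]_n) :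
  is_MP_inverse A Ad -> Q^T = Q -> A *m Q = A -> Q *m Ad = Ad.
Proof.
case=> _ AdAAd _ AdA_sym Q_sym AQ.
have -> : Ad = A^T *m (Ad^T *m Ad) by rewrite -{1}AdAAd -AdA_sym trmx_mul mulmxA.
by rewrite mulmxA -[Q]Q_sym -trmx_mul AQ.
Qed.

Lemma MP_inverse_sym_fixr m n (P : 'M[R]_(m, n)) Pd (Q : 'M[R]_m) :
  is_MP_inverse P Pd -> Q^T = Q -> Q *m P = P -> Pd *m Q = Pd.
Proof.
case=> _ PdPPd PPd_sym _ Q_sym QP.
have -> : Pd = Pd *m Pd^T *m P^T.
  by rewrite -{1}PdPPd -mulmxA -PPd_sym trmx_mul mulmxA.
by rewrite -mulmxA -[Q]Q_sym -trmx_mul QP.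
Qed.

Lemma same_null_sym m n (A P : 'M[R]_(m, n)) : same_null A P -> same_null P A.
Proof. by move=> AP x; split=> /AP. Qed.

Lemma col_mulmx m n k (A : 'M[R]_(m, n)) (B : 'M[R]_(n, k)) j :
  col j (A *m B) = A *m col j B.
Proof. by rewrite !colE mulmxA. Qed.

Lemma same_null_mul0 m n k (A P : 'M[R]_(m, n)) (X : 'M[R]_(n, k)) :
  same_null A P -> P *m X = 0 -> A *m X = 0.
Proof.
move=> AP PX; apply/matrixP => i j.
have /AP : P *m col j X = 0 by rewrite -col_mulmx PX col0.
by rewrite -col_mulmx => /(congr1 (fun v : 'cV_m => v i 0)); rewrite !mxE.
Qed.

Lemma same_range_proj m n (A P : 'M[R]_(m, n)) Ad :
  same_range A P -> A *m Ad *m A = A -> A *m Ad *m P = P.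
Proof.
move=> AP AAdA; apply/matrixP => i j.
have [y Pj] : exists y, col j P = A *m y.
  by apply/AP; exists (col j 1%:M); rewrite -col_mulmx mulmx1.
have : col j (A *m Ad *m P) = col j P by rewrite col_mulmx Pj mulmxA AAdA.
by move/(congr1 (fun v : 'cV_m => v i 0)); rewrite !mxE.
Qed.

Lemma same_null_mul_MP_proj m n (A P : 'M[R]_(m, n)) Pd :
  same_null A P -> is_MP_inverse P Pd -> A *m (Pd *m P) = A.
Proof.
move=> AP [PPdP _ _ _]; apply/eqP; rewrite -subr_eq0 -{2}[A]mulmx1 -mulmxBr.
by apply/eqP/(same_null_mul0 AP); rewrite mulmxBr mulmx1 mulmxA PPdP subrr.
Qed.

Lemma same_null_MP_proj m n (A P : 'M[R]_(m, n)) Ad Pd :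
  is_MP_inverse A Ad -> is_MP_inverse P Pd -> same_null A P -> Pd *m P = Ad *m A.
Proof.
move=> MPA MPP AP.
have PdPAd : Pd *m P *m Ad = Ad.
  apply: (MP_inverse_sym_fixl MPA); first by case: MPP.
  exact: same_null_mul_MP_proj MPP.
have AdAPd : Ad *m A *m Pd = Pd.
  apply: (MP_inverse_sym_fixl MPP); first by case: MPA.
  exact: same_null_mul_MP_proj (same_null_sym AP) MPA.
have [[_ _ _ AdA_sym] [_ _ _ PdP_sym]] := (MPA, MPP).
have AdAPdP : Ad *m A *m (Pd *m P) = Ad *m A.
  by rewrite -AdA_sym -PdP_sym -trmx_mul mulmxA PdPAd.
by rewrite -{1}AdAPd -mulmxA AdAPdP.
Qed.

Lemma same_range_MP_mulKr m n (A P : 'M[R]_(m, n)) Ad Pd :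
  is_MP_inverse A Ad -> is_MP_inverse P Pd -> same_range A P -> Pd *m A *m Ad = Pd.
Proof.
move=> [AAdA _ AAd_sym _] MPP AP; rewrite -mulmxA.
exact: (MP_inverse_sym_fixr MPP AAd_sym (same_range_proj AP AAdA)).
Qed.
End MoorePenrose.

Section DoubleSplitting.
Variables (R : rcfType) (m n : nat).
Implicit Types (A P Rm S : 'M[R]_(m, n)) (Ad Pd : 'M[R]_(n, m)).

Lemma iter_blocks_sumE A P Rm S Pd :
  A = P - Rm + S -> Pd *m Rm + - (Pd *m S) = Pd *m (P - A).
Proof.
move=> ->; rewrite -mulmxN -mulmxDr; congr (_ *m _).
by rewrite opprD opprB addrA [P + _]addrC subrK.
Qed.

Lemma iter_blocks_sum_MPE A P Rm S Ad Pd :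
  is_MP_inverse A Ad -> proper_double_splitting A P Rm S -> is_MP_inverse P Pd ->
  Pd *m Rm + - (Pd *m S) = Ad *m A - Pd *m A.
Proof.
move=> MPA [eA _ AP_null] MPP.
by rewrite (iter_blocks_sumE _ eA) mulmxBr (same_null_MP_proj MPA MPP AP_null).
Qed.

(* [B + C = Pd (P - A)] maps [Ad 1] to [Ad 1 - Pd 1]; take [u = Ad 1 + eta 1]
   with [eta] so small that [eta Pd (P - A) 1 <= Pd 1]. *)
Lemma weak_regular_pds_spectral_radius_lt1 A P Rm S Ad Pd :
  is_MP_inverse A Ad -> mx_nonneg Ad -> weak_regular_pds A P Rm S Pd ->
  spectral_radius (iter_mx Pd Rm S) < 1.
Proof.
move=> MPA Ad_ge0 [[eA AP_range AP_null] MPP Pd_ge0 B_ge0 C_ge0].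
pose ones k : 'cV[R]_k := const_mx 1.
have ones_ge0 k : mx_nonneg (ones k) by move=> i j; rewrite mxE.
pose v := (P - A) *m ones n.
pose eta := (1 + \sum_k `|v k 0|)^-1.
have sum_ge0 : 0 <= \sum_k `|v k 0| by apply: sumr_ge0.
have eta_gt0 : 0 < eta by rewrite invr_gt0; lra.
have eta_v k : eta * v k 0 <= 1.
  rewrite mulrC ler_pdivrMr ?mul1r; last lra.
  apply: le_trans (ler_norm _) _; rewrite (bigD1 k) //= addrCA lerDl.
  by rewrite addr_ge0 // sumr_ge0.
have BCuE : Pd *m (P - A) *m (Ad *m ones m + eta *: ones n) =
    Ad *m ones m - Pd *m ones m + eta *: (Pd *m v).
  rewrite mulmxDr -scalemxAr -[_ *m ones n]mulmxA; congr (_ + _ *: _).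
  have [_ AdAAd _ _] := MPA.
  rewrite mulmxBr mulmxBl (same_null_MP_proj MPA MPP AP_null) !mulmxA AdAAd.
  by rewrite (same_range_MP_mulKr MPA MPP AP_range).
rewrite /iter_mx.
apply: (spectral_radius_block_lt1 (u := Ad *m ones m + eta *: ones n)) => // i.
  by have := mulmx_nonneg Ad_ge0 (ones_ge0 m) i 0; rewrite !mxE; lra.
have : (Pd *m (eta *: v)) i 0 <= (Pd *m ones m) i 0.
  by apply: ler_wpmulmx2l => // k; rewrite mxE [ones m k 0]mxE eta_v.
rewrite (iter_blocks_sumE _ eA) BCuE -scalemxAr !mxE; lra.
Qed.
End DoubleSplitting.

Unset Implicit Arguments.
Set Strict Implicit.

Theorem theorem3p8 (R : rcfType) (m n : nat)
    (A P1 R1 S1 P2 R2 S2 : 'M[R]_(m, n)) (Ad P1d P2d : 'M[R]_(n, m)) :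
  is_MP_inverse A Ad -> mx_nonneg Ad ->
  weak_regular_pds A P1 R1 S1 P1d ->
  weak_regular_pds A P2 R2 S2 P2d ->
  mx_ge (P1d *m A) (P2d *m A) ->
  (mx_ge (P1d *m R1) (P2d *m R2) \/ mx_ge (P1d *m S1) (P2d *m S2)) ->
  spectral_radius (iter_mx P1d R1 S1) <= spectral_radius (iter_mx P2d R2 S2)
  /\ spectral_radius (iter_mx P2d R2 S2) < 1.
Proof.
move=> MPA Ad_ge0 W1 W2 /mx_geP PA_ge BRS_ge.
have rho2_lt1 := weak_regular_pds_spectral_radius_lt1 MPA Ad_ge0 W2.
split=> //; move: W1 W2 => [pds1 MPP1 _ B1_ge0 C1_ge0] [pds2 MPP2 _ B2_ge0 C2_ge0].
have sum_ge : mx_ge (P2d *m R2 + - (P2d *m S2)) (P1d *m R1 + - (P1d *m S1)).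
  rewrite (iter_blocks_sum_MPE MPA pds1 MPP1) (iter_blocks_sum_MPE MPA pds2 MPP2).
  apply/mx_geP => i j.
  by have := PA_ge i j; rewrite !mxE; lra.
have C_ge : mx_ge (- (P2d *m S2)) (- (P1d *m S1)).
  apply/mx_geP => i j; have := proj1 (mx_geP _ _) sum_ge i j.
  by case: BRS_ge => /mx_geP/(_ i j); rewrite !mxE; lra.
exact: spectral_radius_block_le_mono B1_ge0 C1_ge0 B2_ge0 C2_ge0 sum_ge C_ge rho2_lt1.
Qed.
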